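(* Let $G=(V,E)$ be a finite simple graph and let $x$ be a maximum cost construction sequence for $G$ (i.e. $\nu(x)=\nu^*(G)$). If $(v_1,\dots,v_n)$ is the order in which the vertices of $G$ appear in $x$, then $\deg(v_i)\ge\deg(v_{i+1})$ for all $1\le i<n$.
   Context: For a finite simple graph $G=(V,E)$ with $\ell=|V|+|E|$, a construction sequence (c-sequence) is a bijection $x:\{1,\dots,\ell\}\to V\sqcup E$ such that every edge $e=uw$ satisfies $x^{-1}(e)>\max\{x^{-1}(u),x^{-1}(w)\}$. The cost of $x$ is $\nu(x)=\sum_{e=uw\in E}\big(2x^{-1}(e)-x^{-1}(u)-x^{-1}(w)\big)$, and $\nu^*(G)$ is the maximum of $\nu(x)$ over all c-sequences for $G$. *)

From mathcomp Require Import all_boot.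
Set Implicit Arguments. Unset Strict Implicit. Unset Printing Implicit Defensive.

(* A finite simple graph: vertex type T (a finType), adjacency e : rel T,
   assumed symmetric and irreflexive (hypotheses of the theorem). *)
Section CSeq.
Variables (T : finType) (e : rel T).

Definition is_edge (A : {set T}) : bool :=
  [exists u, exists w, e u w && (A == [set u; w])].

Definition Edge := {A : {set T} | is_edge A}.

Definition Elt := (T + Edge)%type.

Definition ell := #|{: Elt}|.

Definition deg (v : T) : nat := #|[set w | e v w]|.

(* x^{-1}(z), positions numbered 1..l (0 if z is not hit, which cannot
   happen for a bijection) *)
Definition pos (x : {ffun 'I_ell -> Elt}) (z : Elt) : nat :=
  match [pick i | x i == z] with Some i => i.+1 | None => 0 end.

(* x is a construction sequence: a bijection {1..l} -> V ⊔ E (injective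
   between sets of equal cardinality) such that every edge comes after
   both of its endpoints. *)
Definition is_cseq (x : {ffun 'I_ell -> Elt}) : bool :=
  injectiveb x &&
  [forall A : Edge, forall u in val A, pos x (inl u) < pos x (inr A)].

Definition cost (x : {ffun 'I_ell -> Elt}) : nat :=
  \sum_(A : Edge) (2 * pos x (inr A) - \sum_(u in val A) pos x (inl u)).

Definition nu_star : nat := \max_(y : {ffun 'I_ell -> Elt} | is_cseq y) cost y.

Definition vertex_order (x : {ffun 'I_ell -> Elt}) : seq T :=
  pmap (fun i : 'I_ell => if x i is inl v then Some v else None) (enum 'I_ell).

End CSeq.

From mathcomp Require Import all_boot zify.
Set Implicit Arguments. Unset Strict Implicit. Unset Printing Implicit Defensive.

(* Let a, b be consecutive in the vertex order of x, at positions p < q, so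
   that only edges lie between them. Moving b to position p (shifting a and
   those edges one step later) yields again a construction sequence. In the
   cost, each edge at b gains q - p >= 1, each edge at a loses at most 1, and
   no other term decreases. Hence the cost rises by at least
   deg b - deg a, which must therefore be <= 0 when x has maximum cost. *)

(* [hoist p q] renumbers the indices when the item at index [q] is moved to
   index [p <= q], the items at [p], ..., [q - 1] moving up by one. *)
Definition hoist (p q m : nat) : nat :=
  if m == q then p else if p <= m < q then m.+1 else m.

Section Hoist.
Variables p q : nat.

Lemma hoistS m : hoist p.+1 q.+1 m.+1 = (hoist p q m).+1.
Proof. by rewrite /hoist eqSS !ltnS; case: ifP => //; case: ifP. Qed.

Hypothesis le_pq : p <= q.

Lemma hoist_lt n m : q < n -> m < n -> hoist p q m < n.
Proof. by rewrite /hoist; repeat case: ifP => ?; lia. Qed.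

Lemma hoist_inj : injective (hoist p q).
Proof. by move=> m k; rewrite /hoist; repeat case: ifP => ?; lia. Qed.

Lemma hoist_mono m k : m < k -> k != q -> hoist p q m < hoist p q k.
Proof. by rewrite /hoist; repeat case: ifP => ?; lia. Qed.

Lemma hoist_gap m k : m < k -> k != q -> ~~ (p < m < q) ->
  k - m + (q - p) * (m == q) <= hoist p q k - hoist p q m + (m == p).
Proof. by rewrite /hoist; repeat case: ifP => ?; case: eqP => ?; lia. Qed.

End Hoist.

Lemma nth_pmap_head (A B : Type) (f : A -> option B) (a0 : A) (b0 : B) s :
  0 < size (pmap f s) ->
  exists q, [/\ q < size s, f (nth a0 s q) = Some (nth b0 (pmap f s) 0)
              & forall j, j < q -> f (nth a0 s j) = None].
Proof.
elim: s => [//|y s IH] /=; case fy: (f y) => [b|] /= s_gt0; first by exists 0.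
have [q [lt_qs fq before_q]] := IH s_gt0.
by exists q.+1; split=> // -[|j] //=; apply: before_q.
Qed.

Lemma nth_pmap_consecutive (A B : Type) (f : A -> option B) (a0 : A) (b0 : B) s i :
  i.+1 < size (pmap f s) ->
  exists p q, [/\ p < q < size s,
    f (nth a0 s p) = Some (nth b0 (pmap f s) i),
    f (nth a0 s q) = Some (nth b0 (pmap f s) i.+1)
    & forall j, p < j < q -> f (nth a0 s j) = None].
Proof.
elim: s i => [//|y s IH] i /=.
case fy: (f y) => [b|] /=; case: i => [|i] lt_is.
- have [q [lt_qs fq before_q]] := nth_pmap_head a0 b0 lt_is.
  by exists 0, q.+1; split=> // -[|j] //=; apply: before_q.
all: have [p [q [lt_pqs fp fq between]]] := IH _ lt_is.
all: by exists p.+1, q.+1; split=> // -[|j] //=; apply: between.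
Qed.

Lemma sum_eq_mem (T : finType) (S : {set T}) v : \sum_(u in S) (u == v) = (v \in S).
Proof.
case: (boolP (v \in S)) => [v_S | v_notS].
  by rewrite (bigD1 v) //= eqxx big1 // => u /andP [_ /negbTE ->].
by rewrite big1 // => u u_S; case: eqP v_notS => // <-; rewrite u_S.
Qed.

Definition other_end (T : finType) (v : T) (S : {set T}) : T :=
  odflt v [pick w in S :\ v].

Lemma other_end_pair (T : finType) (v w : T) : v != w -> other_end v [set v; w] = w.
Proof. by move=> ne_vw; rewrite /other_end setU1K ?pick_set1 ?inE. Qed.

Section Graph.
Variables (T : finType) (e : rel T).
Hypotheses (e_sym : symmetric e) (e_irr : irreflexive e).

Lemma card_edge (A : Edge e) : #|val A| = 2.
Proof.
have /existsP [u /existsP [w /andP [e_uw /eqP ->]]] := valP A.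
by rewrite cards2; case: eqP e_uw => // ->; rewrite e_irr.
Qed.

Lemma edge_through v (A : Edge e) : v \in val A -> exists2 w, e v w & val A = [set v; w].
Proof.
have /existsP [u /existsP [w /andP [e_uw /eqP ->]]] := valP A.
rewrite !inE => /orP [] /eqP ->; first by exists w.
by exists u; rewrite 1?e_sym // setUC.
Qed.

Lemma other_endP v (A : Edge e) : v \in val A ->
  e v (other_end v (val A)) /\ val A = [set v; other_end v (val A)].
Proof.
case/edge_through=> w e_vw ->; rewrite other_end_pair //.
by apply: contraTneq e_vw => <-; rewrite e_irr.
Qed.

Lemma neighbors_other_end v :
  [set w | e v w] = [set other_end v (val A) | A : Edge e & v \in val A].
Proof.
apply/setP=> w; rewrite inE; apply/idP/imsetP => [e_vw | [A]]; last first.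
  by rewrite inE => /other_endP [e_vA _] ->.
have edge_vw : is_edge e [set v; w].
  by apply/existsP; exists v; apply/existsP; exists w; rewrite e_vw eqxx.
exists (Sub _ edge_vw); first by rewrite inE /= !inE eqxx.
by rewrite /= other_end_pair //; apply: contraTneq e_vw => <-; rewrite e_irr.
Qed.

Lemma deg_edges v : deg e v = \sum_(A : Edge e) (v \in val A).
Proof.
rewrite /deg neighbors_other_end card_in_imset => [|A B]; last first.
  rewrite !inE => /other_endP [_ A_vo] /other_endP [_ B_vo] eq_o.
  by apply: val_inj; rewrite A_vo B_vo eq_o.
rewrite -sum1_card big_mkcond; apply: eq_bigr => A _.
by rewrite inE; case: (v \in val A).
Qed.

End Graph.

Section Positions.
Variables (T : finType) (e : rel T).
Local Notation n := (ell e).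

Lemma pos_ffun (y : {ffun 'I_n -> Elt e}) : injective y -> forall k, pos y (y k) = k.+1.
Proof.
move=> y_inj k; rewrite /pos; case: pickP => [i /eqP /y_inj -> // | /(_ k)].
by rewrite eqxx.
Qed.

Variable x : {ffun 'I_n -> Elt e}.
Hypothesis x_cseq : is_cseq x.

Lemma cseq_inj : injective x.
Proof. by case/andP: x_cseq => /injectiveP. Qed.

Lemma cseq_onto z : exists k, x k = z.
Proof.
have [y _ yK] : bijective x by apply: inj_card_bij cseq_inj _; rewrite card_ord.
by exists (y z).
Qed.

Lemma pos_cseq_inj : injective (pos x).
Proof.
move=> z1 z2; have [k1 <-] := cseq_onto z1; have [k2 <-] := cseq_onto z2.
by rewrite !(pos_ffun cseq_inj) => -[/ord_inj ->].
Qed.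

Lemma pos_cseq_eqS (k : 'I_n) z : (pos x z == k.+1) = (z == x k).
Proof. by rewrite -(pos_ffun cseq_inj k) (inj_eq pos_cseq_inj). Qed.

Lemma cseq_pos_lt (A : Edge e) u : u \in val A -> pos x (inl u) < pos x (inr A).
Proof. by case/andP: x_cseq => _ /forallP /(_ A) /forall_inP; apply. Qed.

Lemma cost_cseq : irreflexive e ->
  cost x = \sum_(A : Edge e) \sum_(u in val A) (pos x (inr A) - pos x (inl u)).
Proof.
move=> e_irr; apply: eq_bigr => A _.
rewrite sumnB => [|u]; last by move/cseq_pos_lt/ltnW.
by rewrite sum_nat_const card_edge.
Qed.

End Positions.

Lemma cost_le_nu_star (T : finType) (e : rel T) (y : {ffun 'I_(ell e) -> Elt e}) :
  is_cseq y -> cost y <= nu_star e.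
Proof. exact: (leq_bigmax_cond (F := @cost T e)). Qed.

Section Hoisted.
Variables (T : finType) (e : rel T).
Hypotheses (e_sym : symmetric e) (e_irr : irreflexive e).
Local Notation n := (ell e).
Variables (x : {ffun 'I_n -> Elt e}) (P Q : 'I_n).
Hypotheses (x_cseq : is_cseq x) (lt_PQ : P < Q).

Definition hoist_ord (k : 'I_n) : 'I_n :=
  Ordinal (hoist_lt (ltnW lt_PQ) (ltn_ord Q) (ltn_ord k)).

Lemma hoist_ord_inj : injective hoist_ord.
Proof. by move=> k l [/(hoist_inj (ltnW lt_PQ)) /ord_inj]. Qed.

Definition hoisted : {ffun 'I_n -> Elt e} := [ffun j => x (invF hoist_ord_inj j)].

Lemma hoisted_inj : injective hoisted.
Proof.
by move=> i j; rewrite !ffunE => /(cseq_inj x_cseq) /(can_inj (f_invF hoist_ord_inj)).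
Qed.

Lemma pos_hoisted z : pos hoisted z = hoist P.+1 Q.+1 (pos x z).
Proof.
have [k <-] := cseq_onto x_cseq z.
rewrite (pos_ffun (cseq_inj x_cseq)) hoistS.
have -> : x k = hoisted (hoist_ord k) by rewrite ffunE invF_f.
by rewrite (pos_ffun hoisted_inj).
Qed.

Variables a b : T.
Hypotheses (xP : x P = inl a) (xQ : x Q = inl b)
  (edges_between : forall j : 'I_n, P < j < Q -> exists A, x j = inr A).

Lemma pos_vertex_between v : ~~ (P.+1 < pos x (inl v) < Q.+1).
Proof.
have [k xk] := cseq_onto x_cseq (inl v).
rewrite -xk (pos_ffun (cseq_inj x_cseq)) !ltnS; apply/negP => /edges_between [A].
by rewrite xk.
Qed.

Lemma hoisted_cseq : is_cseq hoisted.
Proof.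
apply/andP; split; first exact/injectiveP/hoisted_inj.
apply/forallP => A; apply/forall_inP => u u_A; rewrite !pos_hoisted.
apply: hoist_mono; [exact: ltnW | exact: cseq_pos_lt |].
by rewrite pos_cseq_eqS // xQ.
Qed.

Lemma hoisted_cost : cost x + (Q - P) * deg e b <= cost hoisted + deg e a.
Proof.
rewrite !(deg_edges e_sym e_irr) !cost_cseq ?hoisted_cseq // big_distrr -!big_split.
apply: leq_sum => A _; rewrite -!sum_eq_mem big_distrr -!big_split /=.
apply: leq_sum => u u_A; rewrite !pos_hoisted.
have le_PQ : P.+1 <= Q.+1 by rewrite ltnS ltnW.
have := hoist_gap le_PQ (cseq_pos_lt x_cseq u_A).
rewrite subSS !pos_cseq_eqS // xP xQ; apply=> //.
exact: pos_vertex_between.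
Qed.

Lemma max_cost_deg_ge : cost x = nu_star e -> deg e b <= deg e a.
Proof.
move=> x_max; have := hoisted_cost; have := cost_le_nu_star hoisted_cseq.
have : deg e b <= (Q - P) * deg e b by rewrite leq_pmull // subn_gt0.
lia.
Qed.

End Hoisted.

Lemma vertex_order_consecutive (T : finType) (e : rel T) (x : {ffun 'I_(ell e) -> Elt e})
    v0 i : i.+1 < size (vertex_order x) ->
  exists P Q : 'I_(ell e), [/\ P < Q,
    x P = inl (nth v0 (vertex_order x) i), x Q = inl (nth v0 (vertex_order x) i.+1)
    & forall j : 'I_(ell e), P < j < Q -> exists A, x j = inr A].
Proof.
rewrite /vertex_order => lt_i.
have n_gt0 : 0 < ell e.
  rewrite -(size_enum_ord (ell e)) -(count_predT (enum _)).
  apply: leq_trans (leq_ltn_trans (leq0n _) lt_i) _; rewrite size_pmap.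
  exact: sub_count.
have [p [q [/andP [lt_pq lt_qn] fp fq between]]] :=
  nth_pmap_consecutive (Ordinal n_gt0) v0 lt_i.
rewrite size_enum_ord in lt_qn.
pose P := Ordinal (ltn_trans lt_pq lt_qn); pose Q := Ordinal lt_qn.
move: fp fq between; rewrite -[p]/(val P) -[q]/(val Q) !nth_ord_enum.
move=> fP fQ between; exists P, Q; split=> //.
- by case: (x P) fP => // v [->].
- by case: (x Q) fQ => // v [->].
- move=> j /between; rewrite nth_ord_enum.
  by case: (x j) => // A _; exists A.
Qed.

Theorem lemma3 (T : finType) (e : rel T)
  (e_sym : symmetric e) (e_irr : irreflexive e)
  (x : {ffun 'I_(ell e) -> Elt e})
  (hx : is_cseq x) (hmax : cost x = nu_star e) :
  let degs := [seq deg e v | v <- vertex_order x] in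
  forall i : nat, i.+1 < size degs ->
    nth 0 degs i.+1 <= nth 0 degs i.
Proof.
move=> degs i; rewrite size_map => lt_i.
have v0 : T by move: lt_i; case: (vertex_order x).
have [P [Q [lt_PQ xP xQ edges_between]]] := vertex_order_consecutive v0 lt_i.
rewrite /degs !(nth_map v0) //; last exact: ltnW.
exact: (max_cost_deg_ge e_sym e_irr hx lt_PQ xP xQ edges_between hmax).
Qed.
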